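(* Let $(H,\mathcal P)$ be a hypergraph colouring instance with pinnings, $H=(V,\mathcal E)$ with maximum degree $\Delta$, and let $k'\le k$ be integers with $k'\ge 2$ such that $k'\le|e|\le k$ for every $e\in\mathcal E$. Let $t\ge k$ and $q\ge(\mathrm e t\Delta)^{\frac{1}{k'-1}}$. Then for every $v\in V$ and every colour $c\in[q]$, $$\Pr_{\sigma\sim\mu_{\mathcal C}}[\sigma(v)=c]\le\frac1q\Big(1+\frac4t\Big).$$
   Context: A hypergraph $H=(V,\mathcal E)$ has finite vertex set $V$ and hyperedges $\mathcal E\subseteq 2^V$; its maximum degree $\Delta$ is the maximum number of hyperedges containing a single vertex. For $q\in\mathbb N$, a hypergraph colouring instance with pinnings is a pair $(H,\mathcal P)$ with $\mathcal P=\{P_e\subseteq[q]:e\in\mathcal E\}$ ($P_e$ is the set of colours already present in $e$). A colouring $\sigma\in[q]^V$ is proper if $|\{\sigma(u):u\in e\}\cup P_e|>1$ for every $e\in\mathcal E$. $\mathcal C$ is the set of proper colourings and $\mu_{\mathcal C}$ the uniform distribution on $\mathcal C$. $\mathrm e$ denotes Euler's number. *)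

From mathcomp Require Import all_boot all_order all_algebra.
From mathcomp Require Import all_classical all_reals all_analysis.
Set Implicit Arguments. Unset Strict Implicit. Unset Printing Implicit Defensive.
Import Order.TTheory GRing.Theory Num.Theory.

(* Hypergraph H = (V, E): V a finType, E : {set {set V}}.
   Colours [q] = 'I_q.  Pinnings P : {set V} -> {set 'I_q} (P e = P_e). *)

Definition hdeg (V : finType) (E : {set {set V}}) (v : V) : nat :=
  #|[set e in E | v \in e]|.
Definition maxdeg (V : finType) (E : {set {set V}}) : nat :=
  \max_(v : V) hdeg E v.

Definition proper_col (V : finType) (q : nat) (E : {set {set V}})
    (P : {set V} -> {set 'I_q}) (sigma : {ffun V -> 'I_q}) : bool :=
  [forall e in E, 1 < #|(sigma @: e) :|: P e|].

Definition proper_cols (V : finType) (q : nat) (E : {set {set V}})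
    (P : {set V} -> {set 'I_q}) : {set {ffun V -> 'I_q}} :=
  [set sigma | proper_col E P sigma].

Definition marg_prob (R : realType) (V : finType) (q : nat) (E : {set {set V}})
    (P : {set V} -> {set 'I_q}) (v : V) (c : 'I_q) : R :=
  (#|[set sigma in proper_cols E P | sigma v == c]|%:R
     / #|proper_cols E P|%:R)%R.

(* Colour V uniformly at random and call an edge e violated when e, together with its
   pinned colours P_e, carries a single colour.  This event depends only on the colours
   of e and has probability at most q^(1-k') <= x/exp(1) for x = 1/(tΔ).  The Lovász local
   lemma in its conditional form, Pr[e violated | no edge of T violated] <= x for e ∉ T,
   follows by induction on |T|: the edges of T disjoint from e are independent of e, and
   conditioning on the at most k(Δ-1) edges meeting e costs at most a factor
   (1-x)^(-k(Δ-1)) <= exp(1).  The same computation for the event σ(v) = c, which meets at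
   most Δ edges, gives Pr[σ(v) = c | σ proper] <= (1/q)(1-x)^(-Δ) <= (1/q)(1-1/t)^(-1)
   <= (1/q)(1+4/t). *)

From mathcomp Require Import all_boot all_order all_algebra.
From mathcomp Require Import all_classical all_reals all_analysis.
From mathcomp Require Import ring lra.
From mathcomp Require unstable.
From mathcomp Require Import fintype finset.
Import Order.TTheory GRing.Theory Num.Theory.
Set Implicit Arguments. Unset Strict Implicit. Unset Printing Implicit Defensive.

Section Colourings.
Variables (V C : finType).
Local Notation col := {ffun V -> C}.

Definition depends_on (D : {set V}) (A : {set col}) : Prop :=
  forall s t : col, {in D, s =1 t} -> (s \in A) = (t \in A).

Definition mix (D : {set V}) (s t : col) : col :=
  [ffun u => if u \in D then s u else t u].

Lemma mix_swap_involutive (D : {set V}) :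
  involutive (fun p : col * col => (mix D p.1 p.2, mix D p.2 p.1)).
Proof.
by case=> s t; congr pair; apply/ffunP => u; rewrite !ffunE; case: (u \in D).
Qed.

Lemma card_setI_depends (D : {set V}) (A B : {set col}) :
  depends_on D A -> depends_on (~: D) B ->
  (#|A :&: B| * #|col| = #|A| * #|B|)%N.
Proof.
move=> depA depB; pose f := fun p : col * col => (mix D p.1 p.2, mix D p.2 p.1).
have f_inj : injective f := inv_inj (@mix_swap_involutive D).
have mixA s t : (mix D s t \in A) = (s \in A).
  by apply: depA => u uD; rewrite ffunE uD.
have mixB s t : (mix D s t \in B) = (t \in B).
  by apply: depB => u; rewrite inE ffunE => /negbTE ->.
have fXY : f @: setX A B \subset setX (A :&: B) [set: col].
  by apply/subsetP => _ /imsetP[[s t] /setXP[sA tB] ->]; rewrite !inE /= mixA mixB sA tB.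
have fYX : f @: setX (A :&: B) [set: col] \subset setX A B.
  apply/subsetP => _ /imsetP[[s t] /setXP[/setIP[sA sB] _] ->].
  by rewrite !inE /= mixA mixB sA sB.
rewrite -cardsT -!cardsX; apply/eqP; rewrite eqn_leq.
have := subset_leq_card fXY; have := subset_leq_card fYX.
by rewrite !card_imset // => -> ->.
Qed.

Lemma card_agree_on (D : {set V}) (g : V -> C) :
  (#|[set s : col | [forall u in D, s u == g u]]| * #|C| ^ #|D| = #|C| ^ #|V|)%N.
Proof.
pose F u := if u \in D then pred1 (g u) else predT.
have -> : [set s : col | [forall u in D, s u == g u]] = [set s in family F].
  apply/setP => s; rewrite !inE; apply/forall_inP/familyP => sF u; rewrite /F.
    by case: ifP => // uD; rewrite inE sF.
  by move=> uD; have := sF u; rewrite /F uD inE.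
rewrite cardsE card_family foldrE big_image /= (bigID (mem D)) /=.
rewrite big1 ?mul1n => [|u uD]; last by rewrite /F uD card1.
rewrite (eq_bigr (fun=> #|C|)) => [|u uD]; last by rewrite /F (negbTE uD).
rewrite prod_nat_const -expnD addnC -(cardsC D); congr (_ ^ (_ + _)).
by apply: eq_card => u; rewrite !inE.
Qed.

Lemma card_colour_at (v : V) (c : C) : (#|[set s : col | s v == c]| * #|C| = #|col|)%N.
Proof.
rewrite card_ffun -(card_agree_on [set v] (fun=> c)) cards1 expn1; congr (_ * _)%N.
apply: eq_card => s; rewrite !inE; apply/idP/forall_inP => [/eqP sv u|sv].
  by rewrite inE => /eqP ->; rewrite sv.
by apply: sv; rewrite inE.
Qed.

Definition violated (P : {set V} -> {set C}) (e : {set V}) : {set col} :=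
  [set s : col | #|s @: e :|: P e| <= 1].

Lemma violated_depends (P : {set V} -> {set C}) e : depends_on e (violated P e).
Proof. by move=> s t eq_st; rewrite !inE (eq_in_imset eq_st). Qed.

Lemma card_violated (P : {set V} -> {set C}) (e : {set V}) :
  e != set0 -> (#|violated P e| * #|C| ^ #|e|.-1 <= #|C| ^ #|V|)%N.
Proof.
case/set0Pn => u0 u0e.
have [C0|C_gt0] := posnP #|C|.
  have : (#|violated P e| <= #|col|)%N := max_card _.
  rewrite card_ffun C0 exp0n; last by apply/card_gt0P; exists u0.
  by rewrite leqn0 => /eqP ->.
rewrite -(leq_pmul2r C_gt0) -mulnA -expnSr prednK; last by apply/card_gt0P; exists u0.
pose A c := [set s : col | [forall u in e, s u == c]].
have viol_sub : violated P e \subset \bigcup_(c : C) A c.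
  apply/subsetP => s; rewrite inE => /card_le1_eqP s_const.
  apply/bigcupP; exists (s u0) => //; rewrite inE; apply/forall_inP => u ue.
  by apply/eqP/s_const; rewrite inE imset_f.
apply: leq_trans (leq_mul (subset_leq_card viol_sub) (leqnn _)) _.
apply: leq_trans (leq_mul (unstable.card_big_setU _ _ _) (leqnn _)) _.
rewrite big_distrl (eq_bigr (fun=> #|C| ^ #|V|)%N) => [|c _]; last exact: card_agree_on.
by rewrite sum_nat_const mulnC.
Qed.

Section Avoidance.
Variable B : {set V} -> {set col}.
Hypothesis B_depends : forall e, depends_on e (B e).

Definition avoid (S : {set {set V}}) : {set col} := \bigcap_(f in S) ~: B f.

Lemma avoidU1 (f : {set V}) (S : {set {set V}}) : avoid (f |: S) = avoid S :\: B f.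
Proof. by rewrite /avoid bigcap_setU big_set1 setDE setIC. Qed.

Lemma avoidS (S S' : {set {set V}}) : S \subset S' -> avoid S' \subset avoid S.
Proof.
move=> sSS'; apply/bigcapsP => f fS; exact: (bigcap_inf _ (subsetP sSS' f fS)).
Qed.

Lemma avoid_depends (S : {set {set V}}) (D : {set V}) :
  {in S, forall f : {set V}, f \subset D} -> depends_on D (avoid S).
Proof.
move=> sSD s t eq_st.
have eqB f : f \in S -> (s \in B f) = (t \in B f).
  by move=> fS; apply: B_depends => u uf; apply: eq_st; apply: subsetP (sSD f fS) u uf.
by apply/bigcapP/bigcapP => avS f fS; have := avS f fS; rewrite !inE eqB.
Qed.

Local Open Scope ring_scope.

Variables (R : realType) (x : R).
Hypotheses (x_ge0 : 0 <= x) (x_lt1 : x < 1).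

Definition cond_prob_bounded (S : {set {set V}}) : Prop :=
  forall (T : {set {set V}}) f, T \subset S -> f \in S -> f \notin T ->
    #|B f :&: avoid T|%:R <= x * #|avoid T|%:R.

Lemma cond_prob_boundedS (S S' : {set {set V}}) :
  S \subset S' -> cond_prob_bounded S' -> cond_prob_bounded S.
Proof.
move=> sSS' bnd T f sTS fS; apply: bnd (subsetP sSS' f fS).
exact: subset_trans sSS'.
Qed.

Lemma card_avoid_setU (S1 S2 : {set {set V}}) :
  [disjoint S1 & S2] -> cond_prob_bounded (S1 :|: S2) ->
  (1 - x) ^+ #|S1| * #|avoid S2|%:R <= #|avoid (S1 :|: S2)|%:R.
Proof.
move=> dS12 bnd; have [n ltS1n] := ubnP #|S1|.
elim: n => // n IH in S1 ltS1n dS12 bnd *.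
have [->|[f fS1]] := set_0Vmem S1; first by rewrite set0U cards0 expr0 mul1r.
set T := S1 :\ f :|: S2.
have defS : S1 :|: S2 = f |: T by rewrite setUA setD1K.
have fT : f \notin T by rewrite !inE eqxx (disjointFr dS12 fS1).
have cardS1 : #|S1| = #|S1 :\ f|.+1 by rewrite (cardsD1 f S1) fS1.
have ihT : (1 - x) ^+ #|S1 :\ f| * #|avoid S2|%:R <= #|avoid T|%:R.
  apply: IH.
  - by rewrite -ltnS -cardS1.
  - exact: disjointWl (subD1set S1 f) dS12.
  - by apply: cond_prob_boundedS bnd; rewrite setSU ?subD1set.
have bf : #|avoid T :&: B f|%:R <= x * #|avoid T|%:R.
  by rewrite setIC; apply: bnd fT; rewrite ?defS ?subsetUr // !inE eqxx.
have splitT : #|avoid T|%:R = #|avoid T :&: B f|%:R + #|avoid (f |: T)|%:R :> R.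
  by rewrite avoidU1 -natrD cardsID.
have x1 : 0 <= 1 - x by rewrite subr_ge0 ltW.
rewrite defS cardS1 exprS -mulrA; apply: le_trans (ler_wpM2l x1 ihT) _.
by rewrite mulrBl mul1r lerBlDr {1}splitT addrC lerD2l.
Qed.

Lemma card_setI_avoid_le (A : {set col}) (D : {set V}) (S : {set {set V}}) :
  depends_on D A -> cond_prob_bounded S ->
  (1 - x) ^+ #|[set f in S | ~~ [disjoint f & D]]| * (#|A :&: avoid S| * #|col|)%:R
    <= (#|A| * #|avoid S|)%:R.
Proof.
move=> depA bnd; set S1 := [set f in S | _]; set S2 := [set f in S | [disjoint f & D]].
have defS : S = S1 :|: S2.
  by apply/setP => f; rewrite !inE; case: (f \in S); case: [disjoint f & D].
have dS12 : [disjoint S1 & S2].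
  rewrite -setI_eq0; apply/eqP/setP => f; rewrite !inE.
  by case: [disjoint f & D]; rewrite ?andbF.
have indep : (#|A :&: avoid S2| * #|col| = #|A| * #|avoid S2|)%N.
  apply: card_setI_depends depA (avoid_depends _) => f.
  by rewrite inE subsets_disjoint setCK => /andP[].
have := card_avoid_setU dS12; rewrite -defS => /(_ bnd) chain.
have sub : (#|A :&: avoid S| <= #|A :&: avoid S2|)%N.
  by rewrite subset_leq_card // setIS // avoidS // defS subsetUr.
have x1 : 0 <= (1 - x) ^+ #|S1| by rewrite exprn_ge0 // subr_ge0 ltW.
apply: le_trans (_ : (1 - x) ^+ #|S1| * (#|A| * #|avoid S2|)%:R <= _).
  by rewrite -indep ler_wpM2l // ler_nat leq_mul2r sub orbT.
by rewrite natrM mulrCA natrM ler_wpM2l.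
Qed.

Variables (E : {set {set V}}) (d : nat).
Hypothesis dependency_degree :
  forall e, e \in E -> (#|[set f in E :\ e | ~~ [disjoint f & e]]| <= d)%N.
Hypothesis B_small : forall e, e \in E -> #|B e|%:R <= x * (1 - x) ^+ d * #|col|%:R.

Theorem lovasz_local_lemma (S : {set {set V}}) : S \subset E -> cond_prob_bounded S.
Proof.
have [n ltSn] := ubnP #|S|; elim: n => // n IH in S ltSn *.
move=> sSE T f sTS fS fT.
have sTE : T \subset E := subset_trans sTS sSE.
have fE : f \in E := subsetP sSE f fS.
have sTSf : T \subset S :\ f.
  by apply/subsetP => g gT; rewrite !inE (subsetP sTS g gT) andbT; apply: contraNneq fT => <-.
have ltTn : (#|T| < n)%N.
  by rewrite (leq_trans _ (ltnSE ltSn)) // (cardsD1 f S) fS add1n ltnS subset_leq_card.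
have := card_setI_avoid_le (@B_depends f) (IH T ltTn sTE).
set m := #|[set g in T | _]|.
have m_le_d : (m <= d)%N.
  apply: leq_trans _ (dependency_degree fE); apply: subset_leq_card; apply/subsetP => g.
  by rewrite !inE => /andP[/(subsetP sTSf) /setD1P[-> /(subsetP sSE) ->] ->].
have x1 : 0 <= 1 - x by rewrite subr_ge0 ltW.
have powd : (1 - x) ^+ d <= (1 - x) ^+ m by rewrite ler_wiXn2l // lerBlDr lerDl.
have [col0|col_gt0] := posnP #|col|.
  have -> : #|B f :&: avoid T| = 0%N by apply/eqP; rewrite -leqn0 -col0 max_card.
  by rewrite mulr_ge0 ?ler0n.
move=> chain.
have c_gt0 : 0 < (1 - x) ^+ d * #|col|%:R by rewrite mulr_gt0 ?exprn_gt0 ?subr_gt0 ?ltr0n.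
rewrite -(ler_pM2l c_gt0).
have -> : (1 - x) ^+ d * #|col|%:R * #|B f :&: avoid T|%:R
    = (1 - x) ^+ d * (#|B f :&: avoid T| * #|col|)%:R by rewrite natrM; ring.
apply: le_trans (ler_wpM2r (ler0n _ _) powd) (le_trans chain _).
have -> : (1 - x) ^+ d * #|col|%:R * (x * #|avoid T|%:R)
    = x * (1 - x) ^+ d * #|col|%:R * #|avoid T|%:R by ring.
by rewrite natrM; apply: ler_wpM2r; [exact: ler0n | exact: B_small].
Qed.

End Avoidance.
End Colourings.

Lemma card_edges_meeting (V : finType) (E : {set {set V}}) (e : {set V}) :
  e \in E -> (#|[set f in E :\ e | ~~ [disjoint f & e]]| <= #|e| * (maxdeg E).-1)%N.
Proof.
move=> eE.
have sub : [set f in E :\ e | ~~ [disjoint f & e]]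
    \subset \bigcup_(u in e) ([set f in E | u \in f] :\ e).
  apply/subsetP => f; rewrite !inE => /andP[/andP[fe fE]].
  rewrite -setI_eq0 => /set0Pn[u /setIP[uf ue]].
  by apply/bigcupP; exists u; rewrite // !inE fe fE.
apply: leq_trans (subset_leq_card sub) _.
apply: leq_trans (unstable.card_big_setU _ _ _) _.
rewrite -sum_nat_const leq_sum // => u ue.
have := cardsD1 e [set f in E | u \in f]; rewrite !inE eE ue add1n => deg_u.
have : (hdeg E u <= maxdeg E)%N := leq_bigmax u.
by rewrite /hdeg deg_u; case: (maxdeg E).
Qed.

Lemma maxdeg_gt0 (V : finType) (E : {set {set V}}) (e : {set V}) :
  e \in E -> e != set0 -> (0 < maxdeg E)%N.
Proof.
move=> eE /set0Pn[u ue]; apply: leq_trans (leq_bigmax u).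
by apply/card_gt0P; exists e; rewrite inE eE.
Qed.

Lemma proper_cols_avoid (V : finType) (q : nat) (E : {set {set V}})
    (P : {set V} -> {set 'I_q}) :
  proper_cols E P = avoid (violated P) E.
Proof.
apply/setP => s; rewrite !inE; apply/forall_inP/bigcapP => proper_s f fE.
  by rewrite !inE -ltnNge proper_s.
by have := proper_s f fE; rewrite !inE -ltnNge.
Qed.

Local Open Scope ring_scope.

Lemma bernoulli_ineq (R : realDomainType) (x : R) n : x <= 1 -> 1 - n%:R * x <= (1 - x) ^+ n.
Proof.
move=> x_le1; elim: n => [|n IH]; first by rewrite mul0r subr0 expr0.
have x1 : 0 <= 1 - x by rewrite subr_ge0.
rewrite exprS; apply: le_trans (ler_wpM2l x1 IH).
have -> : (1 - x) * (1 - n%:R * x) = 1 - n.+1%:R * x + n%:R * x ^+ 2.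
  by rewrite -natr1; ring.
by rewrite lerDl mulr_ge0 ?ler0n ?sqr_ge0.
Qed.

Lemma expRN1_le_expr1B (R : realType) (x : R) n :
  0 <= x -> x < 1 -> n%:R * x <= 1 - x -> expR (-1) <= (1 - x) ^+ n.
Proof.
move=> x_ge0 x_lt1 nx_le.
have x1 : 0 < 1 - x by rewrite subr_gt0.
pose y := x / (1 - x).
have expNy_le : expR (- y) <= 1 - x.
  rewrite expRN -div1r ler_pdivrMr ?expR_gt0 //.
  apply: le_trans (ler_wpM2l (ltW x1) (expR_ge1Dx y)).
  by rewrite mulrDr mulr1 mulrC divfK ?gt_eqF // subrK.
have pow_le : expR (- y) ^+ n <= (1 - x) ^+ n.
  by apply: lerXn2r => //; rewrite nnegrE ?expR_ge0 ?ltW.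
apply: le_trans pow_le.
by rewrite -expRM_natl ler_expR mulrN lerN2 mulrA ler_pdivrMr // mul1r.
Qed.

Lemma le_expr_of_powR_invn (R : realType) (a b : R) n :
  (0 < n)%N -> 0 <= a -> 0 <= b -> powR a (1 / n%:R) <= b -> a <= b ^+ n.
Proof.
move=> n_gt0 a_ge0 b_ge0 root_le.
have := lerXn2r n _ _ root_le; rewrite !nnegrE powR_ge0 => /(_ isT b_ge0).
rewrite -[X in X <= _]powR_mulrn ?powR_ge0 // -powRrM div1r mulVf ?powRr1 //.
by rewrite pnatr_eq0 -lt0n.
Qed.

Lemma le_mul_1D4t (R : realFieldType) (t p m r : R) :
  2 <= t -> 1 - t^-1 <= p -> 0 <= m -> p * m <= r -> m <= (1 + 4 / t) * r.
Proof.
move=> t_ge2 p_ge m_ge0 pm_le.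
have t_gt0 : 0 < t by apply: lt_le_trans t_ge2.
have it_ge0 : 0 <= t^-1 by rewrite invr_ge0 ltW.
have it_le : t^-1 <= 2^-1 by rewrite lef_pV2 ?posrE.
have c_ge0 : 0 <= 1 + 4 / t by rewrite addr_ge0 ?mulr_ge0.
have c_p : 1 <= (1 + 4 / t) * p.
  apply: le_trans (ler_wpM2l c_ge0 p_ge).
  have -> : (1 + 4 / t) * (1 - t^-1) = 1 + t^-1 * (3 - 4 * t^-1) by ring.
  by rewrite lerDl mulr_ge0 //; lra.
have := ler_wpM2r m_ge0 c_p; rewrite mul1r -mulrA => /le_trans; apply.
exact: ler_wpM2l.
Qed.

Lemma natr_mul_inv_le (R : realFieldType) (t : R) (n m k : nat) :
  0 < t -> (n <= k * m)%N -> n%:R * (t * m%:R)^-1 <= k%:R / t.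
Proof.
move=> t_gt0 le_nkm; have [m0|m_gt0] := posnP m.
  move: le_nkm; rewrite m0 muln0 leqn0 => /eqP ->.
  by rewrite mul0r divr_ge0 ?ler0n ?ltW.
rewrite invfM mulrCA mulrC ler_pM2r ?invr_gt0 // ler_pdivrMr ?ltr0n //.
by rewrite -natrM ler_nat.
Qed.

Section Weight.
Variables (R : realType) (t : R) (Δ : nat).
Hypothesis t_ge2 : 2 <= t.

(* [maxn Δ 1] rather than [Δ]: for [Δ = 0] the junk value [(t * 0)^-1 = 0]
   would break [dependency_mul_lll_weight]. *)
Definition lll_weight : R := (t * (maxn Δ 1)%:R)^-1.

Let t_gt0 : 0 < t. Proof. exact: lt_le_trans t_ge2. Qed.

Lemma lll_weight_ge0 : 0 <= lll_weight.
Proof. by rewrite invr_ge0 mulr_ge0 ?ler0n ?ltW. Qed.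

Lemma maxdeg_mul_lll_weight : Δ%:R * lll_weight <= t^-1.
Proof.
apply: le_trans (natr_mul_inv_le t_gt0 (_ : Δ <= 1 * maxn Δ 1)%N) _.
  by rewrite mul1n leq_maxl.
by rewrite div1r.
Qed.

Lemma lll_weight_lt1 : lll_weight < 1.
Proof.
have := natr_mul_inv_le t_gt0 (_ : 1 <= 1 * maxn Δ 1)%N; rewrite mul1n leq_maxr mul1r.
move=> /(_ isT) /le_lt_trans; apply; rewrite mul1r invf_lt1 //.
by apply: lt_le_trans t_ge2; rewrite ltr1n.
Qed.

Lemma dependency_mul_lll_weight (k : nat) :
  (0 < k)%N -> k%:R <= t -> (k * Δ.-1)%:R * lll_weight <= 1 - lll_weight.
Proof.
move=> k_gt0 k_le_t; rewrite lerBrDr -[X in _ + X]mul1r -mulrDl natr1.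
apply: le_trans (natr_mul_inv_le t_gt0 (_ : _ <= k * maxn Δ 1)%N) _.
  case: (Δ) => [|n] /=; first by rewrite muln0 muln_gt0 k_gt0.
  by rewrite ltn_pmul2l // leq_max leqnn.
by rewrite ler_pdivrMr // mul1r.
Qed.

Lemma expR1_le_lll_weight_mul (q n m : nat) :
  (0 < Δ)%N -> (0 < n)%N -> (n <= m)%N -> (0 < q)%N ->
  powR (expR 1 * t * Δ%:R) (1 / n%:R) <= q%:R -> expR 1 <= lll_weight * q%:R ^+ m.
Proof.
move=> Δ_gt0 n_gt0 le_nm q_gt0 root_le.
have tΔ_gt0 : 0 < t * Δ%:R by rewrite mulr_gt0 ?ltr0n.
have etΔ_ge0 : 0 <= expR 1 * t * Δ%:R by rewrite -mulrA mulr_ge0 ?expR_ge0 ?ltW.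
have le_qn := le_expr_of_powR_invn n_gt0 etΔ_ge0 (ler0n _ _) root_le.
rewrite /lll_weight (maxn_idPl Δ_gt0) -(ler_pM2l tΔ_gt0) mulrA mulfV ?gt_eqF //.
rewrite mul1r mulrC mulrA; apply: le_trans le_qn _.
by rewrite -!natrX ler_nat leq_pexp2l.
Qed.

End Weight.

Section MarginalBound.
Variables (R : realType) (V : finType) (q : nat).
Variables (E : {set {set V}}) (P : {set V} -> {set 'I_q}).
Variables (x : R) (d : nat).
Hypotheses (x_ge0 : 0 <= x) (x_lt1 : x < 1) (dx_le : d%:R * x <= 1 - x).
Hypothesis edge_nonempty : forall e, e \in E -> e != set0.
Hypothesis edge_degree : forall e, e \in E -> (#|e| * (maxdeg E).-1 <= d)%N.
Hypothesis q_large : forall e, e \in E -> expR 1 <= x * q%:R ^+ #|e|.-1.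

Lemma card_violated_le e :
  e \in E -> #|violated P e|%:R <= x * (1 - x) ^+ d * #|{ffun V -> 'I_q}|%:R.
Proof.
move=> eE; set b := #|violated P e|%:R; set N := #|_|%:R.
have bq_le : b * q%:R ^+ #|e|.-1 <= N.
  rewrite /b /N card_ffun card_ord -natrX -natrM ler_nat.
  by have := card_violated P (edge_nonempty eE); rewrite card_ord.
have eb_le : expR 1 * b <= x * N.
  apply: le_trans (ler_wpM2r (ler0n _ _) (q_large eE)) _.
  by rewrite mulrAC -mulrA ler_wpM2l.
rewrite mulrAC -mulrA -[b](mulKf (lt0r_neq0 (expR_gt0 (1 : R)))) -expRN.
apply: le_trans (ler_wpM2l (expR_ge0 _) eb_le) _.
have -> : x * (N * (1 - x) ^+ d) = (1 - x) ^+ d * (x * N) by ring.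
apply: ler_wpM2r; first by rewrite mulr_ge0 ?ler0n.
exact: expRN1_le_expr1B x_ge0 x_lt1 dx_le.
Qed.

Theorem marg_prob_le (v : V) (c : 'I_q) :
  (1 - x) ^+ hdeg E v * marg_prob R E P v c <= q%:R^-1.
Proof.
have q_gt0 : (0 < q)%N := leq_ltn_trans (leq0n c) (ltn_ord c).
have dep_degree e : e \in E -> (#|[set f in E :\ e | ~~ [disjoint f & e]]| <= d)%N.
  by move=> eE; apply: leq_trans (card_edges_meeting eE) (edge_degree eE).
have lll := lovasz_local_lemma (@violated_depends _ _ P) x_ge0 x_lt1 dep_degree
  card_violated_le (subxx E).
set A := [set s : {ffun V -> 'I_q} | s v == c].
have depA : depends_on [set v] A by move=> s t eq_st; rewrite !inE eq_st ?inE.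
have := card_setI_avoid_le (@violated_depends _ _ P) x_lt1 depA lll.
have -> : [set f in E | ~~ [disjoint f & [set v]]] = [set f in E | v \in f].
  by apply/setP => f; rewrite !inE disjoint_sym disjoints1 negbK.
rewrite -/(hdeg E v) /marg_prob proper_cols_avoid.
have -> : [set s in avoid (violated P) E | s v == c] = A :&: avoid (violated P) E.
  by apply/setP => s; rewrite !inE andbC.
set a := #|A :&: _|; set w := #|avoid _ _|; set N := #|{ffun V -> 'I_q}| => bound.
have [w0|w_gt0] := posnP w; first by rewrite w0 invr0 !mulr0 invr_ge0 ler0n.
have N_gt0 : (0 < N)%N by rewrite /N card_ffun card_ord expn_gt0 q_gt0.
have AqN : (#|A| * q)%N = N by rewrite /N -(card_colour_at v c) card_ord.
(* Opaque atoms keep [ring] from trying to compute the cardinalities. *)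
set nA := #|A| in bound AqN; set p := (1 - x) ^+ _ in bound *; clearbody a w N nA p.
rewrite mulrA ler_pdivrMr ?ltr0n // ler_pdivlMl ?ltr0n // -(@ler_pM2r _ N%:R) ?ltr0n //.
have -> : w%:R * N%:R = q%:R * (nA * w)%:R :> R by rewrite -AqN !natrM; ring.
have -> : q%:R * (p * a%:R) * N%:R = q%:R * (p * (a * N)%:R) by rewrite natrM; ring.
by apply: ler_wpM2l; rewrite ?ler0n.
Qed.

End MarginalBound.

Theorem lemma2p3 (R : realType) (V : finType) (q : nat)
    (E : {set {set V}}) (P : {set V} -> {set 'I_q})
    (k k' : nat) (t : R) :
  (2 <= k')%N -> (k' <= k)%N ->
  (forall e, e \in E -> (k' <= #|e| <= k)%N) ->
  k%:R <= t ->
  powR (expR 1 * t * (maxdeg E)%:R) (1 / (k'.-1)%:R) <= q%:R ->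
  forall (v : V) (c : 'I_q),
    marg_prob R E P v c <= q%:R^-1 * (1 + 4 / t).
Proof.
move=> k'_ge2 k'_le_k E_size k_le_t q_large v c.
have k_gt0 : (0 < k)%N := leq_trans (ltnW k'_ge2) k'_le_k.
have t_ge2 : 2 <= t by apply: le_trans k_le_t; rewrite ler_nat (leq_trans k'_ge2).
have q_gt0 : (0 < q)%N := leq_ltn_trans (leq0n c) (ltn_ord c).
set x := lll_weight t (maxdeg E).
have edge_nonempty e : e \in E -> e != set0.
  by move=> /E_size /andP[ke _]; rewrite -card_gt0 (leq_trans _ ke) // ltnW.
have edge_degree e : e \in E -> (#|e| * (maxdeg E).-1 <= k * (maxdeg E).-1)%N.
  by move=> /E_size /andP[_ ek]; rewrite leq_mul2r ek orbT.
have edge_q e : e \in E -> expR 1 <= x * q%:R ^+ #|e|.-1.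
  move=> eE; have /andP[ke _] := E_size e eE.
  apply: expR1_le_lll_weight_mul q_large => //; last by rewrite -!subn1 leq_sub2r.
    exact: maxdeg_gt0 eE (edge_nonempty e eE).
  by rewrite -subn1 subn_gt0.
have := marg_prob_le P (lll_weight_ge0 _ t_ge2) (lll_weight_lt1 _ t_ge2)
  (dependency_mul_lll_weight _ t_ge2 k_gt0 k_le_t) edge_nonempty edge_degree edge_q v c.
have p_ge : 1 - t^-1 <= (1 - x) ^+ hdeg E v.
  apply: le_trans (bernoulli_ineq _ (ltW (lll_weight_lt1 _ t_ge2))); rewrite lerD2l lerN2.
  apply: le_trans (maxdeg_mul_lll_weight _ t_ge2); apply: ler_wpM2r.
    exact: lll_weight_ge0.
  by rewrite ler_nat leq_bigmax.
move=> bound; rewrite mulrC; apply: le_mul_1D4t t_ge2 p_ge _ bound.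
by rewrite divr_ge0 ?ler0n.
Qed.
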